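(* For all positive integers $s,k$ and every integer $n\geq 3$, the graph $sF_{n+1}\cup kF_n$ (the disjoint union of $s$ copies of $F_{n+1}$ and $k$ copies of $F_n$) is $C_3$-supermagic.
   Context: All graphs are finite and simple. For a graph $H$, a graph $G=(V,E)$ has an $H$-covering if every edge of $G$ belongs to a subgraph of $G$ isomorphic to $H$. For such $G$, an $H$-magic labeling is a bijection $\lambda: V\cup E\to\{1,2,\dots,|V|+|E|\}$ for which there is a constant $c$ such that for every subgraph $H'=(V',E')$ of $G$ isomorphic to $H$, $\sum_{v\in V'}\lambda(v)+\sum_{e\in E'}\lambda(e)=c$. It is $H$-supermagic if moreover $\{\lambda(v):v\in V\}=\{1,\dots,|V|\}$; $G$ is $H$-supermagic if it admits such a labeling. $C_k$ is the cycle of length $k$. $sG$ denotes the disjoint union of $s$ copies of $G$, and $\cup$ denotes disjoint union. For $n\geq 3$, the fan $F_n=K_1+P_n$ has vertices $c,v_1,\dots,v_n$ and edges $cv_i$ ($1\le i\le n$) and $v_iv_{i+1}$ ($1\le i\le n-1$). *)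

From mathcomp Require Import all_boot.
Set Implicit Arguments. Unset Strict Implicit. Unset Printing Implicit Defensive.

(* A finite simple graph is given by a finType of vertices V and an adjacency
   relation adj : rel V (symmetric and irreflexive for the graphs used here). *)

Section Graphs.
Variables (V : finType) (adj : rel V).

Definition edge_set : {set {set V}} :=
  [set e | [exists x, exists y, adj x y && (e == [set x; y])]].

Definition Edge : finType := {e : {set V} | e \in edge_set}.

(* Subgraphs isomorphic to C_3: three pairwise adjacent vertices, together
   with the three edges joining them (the edges of G contained in T). *)
Definition is_triangle (T : {set V}) : bool :=
  (#|T| == 3) && [forall x in T, forall y in T, (x != y) ==> adj x y].

Definition C3_covering : Prop :=
  forall e : Edge, exists T : {set V}, is_triangle T /\ val e \subset T.

Definition tri_weight (lam : V + Edge -> nat) (T : {set V}) : nat :=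
  \sum_(v in T) lam (inl v) + \sum_(e : Edge | val e \subset T) lam (inr e).

Definition total_labeling (lam : V + Edge -> nat) : Prop :=
  injective lam /\
  (forall x, 1 <= lam x <= #|V| + #|{: Edge}|) /\
  (forall m, 1 <= m <= #|V| + #|{: Edge}| -> exists x, lam x = m).

Definition C3_magic_labeling (lam : V + Edge -> nat) : Prop :=
  total_labeling lam /\
  exists c, forall T : {set V}, is_triangle T -> tri_weight lam T = c.

Definition C3_supermagic_labeling (lam : V + Edge -> nat) : Prop :=
  C3_magic_labeling lam /\
  (forall m, (exists v, lam (inl v) = m) <-> 1 <= m <= #|V|).

Definition C3_supermagic : Prop :=
  C3_covering /\ exists lam, C3_supermagic_labeling lam.

End Graphs.

(* Fan F_m on vertex set 'I_m.+1: index 0 is the centre c, index i >= 1 is v_i.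
   Edges: c v_i (1 <= i <= m) and v_i v_(i+1) (1 <= i <= m-1). *)
Definition fan_adj (m : nat) : rel 'I_m.+1 :=
  fun i j =>
    [|| (i == 0 :> nat) && (j != 0 :> nat),
        (j == 0 :> nat) && (i != 0 :> nat),
        (i != 0 :> nat) && (i.+1 == j :> nat)
      | (j != 0 :> nat) && (j.+1 == i :> nat)].

Definition fan_union_vertex (s k a b : nat) : finType :=
  (('I_s * 'I_a.+1) + ('I_k * 'I_b.+1))%type.

Definition fan_union_adj (s k a b : nat) : rel (fan_union_vertex s k a b) :=
  fun x y =>
    match x, y with
    | inl (p, i), inl (q, j) => (p == q) && fan_adj i j
    | inr (p, i), inr (q, j) => (p == q) && fan_adj i j
    | _, _ => false
    end.

From mathcomp Require Import all_boot zify.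
Set Implicit Arguments. Unset Strict Implicit. Unset Printing Implicit Defensive.

(* Let P be the number of rim vertices and Q the number of fans. Rank the rim
   vertices of all fans consecutively 0, ..., P-1, and rank the rim edges
   consecutively as well.  The rim vertex of rank t gets t/2 + 1 if t is even and
   (P+1)/2 + 1 + t/2 if t is odd, so two consecutive ranks carry labels summing to
   t + const; the centre of fan c gets P + 1 + c; the spoke to the rim vertex of
   rank t gets 3P - t; the rim edge leaving the rim vertex of rank t in fan c gets
   P + Q + 1 + (t - c).  Every triangle is a centre c together with two
   consecutive rim vertices of ranks t, t+1 of its fan, and in its weight the
   contributions of t and of c cancel. *)

Lemma card_of_nat_bij (T : finType) (h : T -> nat) N :
  injective h -> (forall x, 0 < h x <= N) ->
  (forall m, 0 < m <= N -> exists x, h x = m) -> #|T| = N.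
Proof.
move=> h_inj h_range h_surj.
have uniq_h : uniq (map h (enum T)) by rewrite map_inj_uniq ?enum_uniq.
have mem_h : map h (enum T) =i iota 1 N.
  move=> m; rewrite mem_iota; apply/mapP/idP => [[x _ ->]|hm].
    by have := h_range x; lia.
  by have [x <-] := h_surj m ltac:(lia); exists x; rewrite ?mem_enum.
by rewrite cardE -(size_map h) (perm_size (uniq_perm uniq_h (iota_uniq 1 N) mem_h)) size_iota.
Qed.

Lemma nat_label_surj (T : finType) (h : T -> nat) :
  injective h -> (forall x, 0 < h x <= #|T|) ->
  forall m, 0 < m <= #|T| -> exists x, h x = m.
Proof.
move=> h_inj h_range m hm.
have uniq_h : uniq (map h (enum T)) by rewrite map_inj_uniq ?enum_uniq.
have sub_h : {subset map h (enum T) <= iota 1 #|T|}.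
  by move=> u /mapP [x _ ->]; rewrite mem_iota; have := h_range x; lia.
have [_ mem_h] := uniq_min_size uniq_h sub_h ltac:(by rewrite size_map size_iota cardE).
have : m \in iota 1 #|T| by rewrite mem_iota; lia.
by rewrite -mem_h => /mapP [x _ ->]; exists x.
Qed.

Lemma set2_eq_cases (T : finType) (x y x' y' : T) : [set x; y] = [set x'; y'] ->
  (x = x' /\ y = y') \/ (x = y' /\ y = x').
Proof.
move=> E.
have : x \in [set x'; y'] by rewrite -E set21.
have : y \in [set x'; y'] by rewrite -E set22.
have : x' \in [set x; y] by rewrite E set21.
have : y' \in [set x; y] by rewrite E set22.
by do 4!case/set2P=> ?; subst; auto.
Qed.

Section TriangleLabelings.
Variables (V : finType) (adj : rel V).
Hypotheses (adj_sym : symmetric adj) (adj_irr : irreflexive adj).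

Lemma edgeP (e : Edge adj) : exists x y, adj x y /\ val e = [set x; y].
Proof.
have := valP e; rewrite inE => /existsP [x /existsP [y /andP [h /eqP ->]]].
by exists x, y.
Qed.

Lemma set2_in_edge_set x y : adj x y -> [set x; y] \in edge_set adj.
Proof.
by move=> h; rewrite inE; apply/existsP; exists x; apply/existsP; exists y; rewrite h eqxx.
Qed.

Definition mk_edge x y (h : adj x y) : Edge adj := exist _ [set x; y] (set2_in_edge_set h).

Lemma adj_neq x y : adj x y -> x != y.
Proof. by apply: contraTneq => ->; rewrite adj_irr. Qed.

Lemma is_triangleP T : is_triangle adj T -> exists x y z,
  [/\ adj x y, adj y z, adj x z & T = x |: [set y; z]].
Proof.
case/andP=> /eqP T3 /forall_inP T_adj.
have adjT u w : u \in T -> w \in T -> u != w -> adj u w.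
  by move=> uT wT uw; move/forall_inP: (T_adj u uT) => /(_ w wT); rewrite uw.
have [x xT] : exists x, x \in T by apply/set0Pn; rewrite -card_gt0 T3.
have /cards2P [y [z [yz Ex]]] : #|T :\ x| == 2 by have := cardsD1 x T; rewrite xT T3; lia.
have : y \in T :\ x by rewrite Ex set21.
have : z \in T :\ x by rewrite Ex set22.
rewrite !inE => /andP [zx zT] /andP [yx yT].
exists x, y, z; split; rewrite ?adjT // 1?eq_sym //.
by rewrite -Ex setD1K.
Qed.

Lemma set3_is_triangle x y z : adj x y -> adj y z -> adj x z ->
  is_triangle adj (x |: [set y; z]).
Proof.
move=> xy yz xz.
rewrite /is_triangle cardsU1 cards2 !inE negb_or !adj_neq //=.
apply/forall_inP => u; rewrite !inE => hu; apply/forall_inP => w; rewrite !inE => hw.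
apply/implyP; move: hu hw; do 2!case/or3P=> /eqP->; by rewrite ?eqxx // adj_sym.
Qed.

Lemma edges_in_set3 x y z (xy : adj x y) (yz : adj y z) (xz : adj x z) (e : Edge adj) :
  (val e \subset x |: [set y; z]) = (e \in mk_edge xy |: [set mk_edge yz; mk_edge xz]).
Proof.
have val_eq u w (uw : adj u w) : (e == mk_edge uw) = (val e == [set u; w]) by [].
rewrite !inE !val_eq; have [u [w [uw ->]]] := edgeP e; apply/subsetP/idP => [sub|].
  move: (sub u (set21 _ _)) (sub w (set22 _ _)) (adj_neq uw); rewrite !inE.
  by do 2!case/or3P=> /eqP->; rewrite ?eqxx ?orbT // => _; rewrite setUC eqxx ?orbT.
by case/or3P=> /eqP-> v; rewrite !inE; case/orP=> ->; rewrite ?orbT.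
Qed.

Variables (f : V -> nat) (g : V -> V -> nat) (M W : nat).
Hypotheses
  (g_sym : forall x y, adj x y -> g x y = g y x)
  (f_inj : injective f)
  (f_range : forall x, 0 < f x <= #|V|)
  (g_range : forall x y, adj x y -> #|V| < g x y <= #|V| + M)
  (g_inj : forall x y x' y', adj x y -> adj x' y' -> g x y = g x' y' ->
     [set x; y] = [set x'; y'])
  (g_surj : forall m, #|V| < m <= #|V| + M -> exists x y, adj x y /\ g x y = m)
  (adj_in_triangle : forall x y, adj x y -> exists z, adj x z && adj y z)
  (triangle_sum : forall x y z, adj x y -> adj y z -> adj x z ->
     f x + f y + f z + g x y + g y z + g x z = W).

Definition edge_label (e : Edge adj) : nat :=
  if [pick xy : V * V | adj xy.1 xy.2 && (val e == [set xy.1; xy.2])] is Some xy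
  then g xy.1 xy.2 else 0.

Lemma edge_labelE e x y : adj x y -> val e = [set x; y] -> edge_label e = g x y.
Proof.
move=> xy Ee; rewrite /edge_label; case: pickP => [[u v] /andP [/= uv /eqP]|no_pick].
  by rewrite Ee => /set2_eq_cases [[-> ->]|[-> ->]] //; rewrite g_sym.
by have := no_pick (x, y); rewrite /= xy Ee eqxx.
Qed.

Lemma mk_edge_label x y (xy : adj x y) : edge_label (mk_edge xy) = g x y.
Proof. exact: edge_labelE. Qed.

Lemma edge_label_range e : #|V| < edge_label e <= #|V| + M.
Proof. by have [x [y [xy Ee]]] := edgeP e; rewrite (edge_labelE xy Ee) g_range. Qed.

Lemma edge_label_inj : injective edge_label.
Proof.
move=> e e'; have [x [y [xy Ee]]] := edgeP e; have [x' [y' [xy' Ee']]] := edgeP e'.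
rewrite (edge_labelE xy Ee) (edge_labelE xy' Ee') => /(g_inj xy xy') E.
by apply: val_inj; rewrite Ee Ee'.
Qed.

Lemma card_edges : #|{: Edge adj}| = M.
Proof.
apply: (@card_of_nat_bij _ (fun e => edge_label e - #|V|)).
- move=> e e' E; apply: edge_label_inj.
  by have := edge_label_range e; have := edge_label_range e'; lia.
- by move=> e; have := edge_label_range e; lia.
move=> m hm; have [x [y [xy gxy]]] := g_surj (m := m + #|V|) ltac:(lia).
by exists (mk_edge xy); rewrite mk_edge_label gxy addnK.
Qed.

Definition total_label (z : V + Edge adj) : nat :=
  match z with inl v => f v | inr e => edge_label e end.

Lemma total_label_inj : injective total_label.
Proof.
case=> [v|e] [v'|e'] //=.
- by move/f_inj ->.
- by have := f_range v; have := edge_label_range e'; lia.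
- by have := f_range v'; have := edge_label_range e; lia.
- by move/edge_label_inj ->.
Qed.

Lemma tri_weight_set3 x y z : adj x y -> adj y z -> adj x z ->
  tri_weight total_label (x |: [set y; z]) = f x + f y + f z + g x y + g y z + g x z.
Proof.
move=> xy yz xz.
have /and3P [/andP [x_y y_x] /andP [y_z z_y] /andP [x_z z_x]] :
    [&& (x != y) && (y != x), (y != z) && (z != y) & (x != z) && (z != x)].
  by rewrite !adj_neq // adj_sym.
have neq_edges u v u' v' w (uv : adj u v) (uv' : adj u' v') :
    w \in [set u; v] -> w \notin [set u'; v'] -> mk_edge uv != mk_edge uv'.
  by move=> wuv; apply: contraNneq => /(congr1 val) /= <-.
have xy_yz : mk_edge xy != mk_edge yz.
  by apply: (neq_edges _ _ _ _ x); rewrite !inE ?negb_or ?eqxx ?x_y ?x_z.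
have xy_xz : mk_edge xy != mk_edge xz.
  by apply: (neq_edges _ _ _ _ y); rewrite !inE ?negb_or ?eqxx ?orbT ?y_x ?y_z.
have yz_xz : mk_edge yz != mk_edge xz.
  by apply: (neq_edges _ _ _ _ y); rewrite !inE ?negb_or ?eqxx ?y_x ?y_z.
rewrite /tri_weight (eq_bigl _ _ (edges_in_set3 xy yz xz)).
rewrite !big_setU1 ?big_set1 ?inE ?negb_or ?x_y ?x_z ?y_z ?xy_yz ?xy_xz ?yz_xz //=.
by rewrite !mk_edge_label; lia.
Qed.

Theorem C3_supermagic_of_labels : C3_supermagic adj.
Proof.
have card_all : #|V| + #|{: Edge adj}| = #|V| + M by rewrite card_edges.
split.
  move=> e; have [x [y [xy ->]]] := edgeP e; have [z /andP [xz yz]] := adj_in_triangle xy.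
  exists (x |: [set y; z]); split; first by apply: set3_is_triangle; rewrite // adj_sym.
  by apply/subsetP => w; rewrite !inE; case/orP=> ->; rewrite ?orbT.
have f_surj := nat_label_surj f_inj f_range.
exists total_label; split; [split; [split|]|].
- exact: total_label_inj.
- rewrite card_all; split=> [[v|e]|m hm].
  + by have := f_range v; rewrite [total_label _]/=; lia.
  + by have := edge_label_range e; rewrite [total_label _]/=; lia.
  + case: (leqP m #|V|) => hmV.
      by have [v <-] := f_surj m ltac:(lia); exists (inl v).
    have [x [y [xy <-]]] := g_surj (m := m) ltac:(lia).
    by exists (inr (mk_edge xy)); rewrite /= mk_edge_label.
- exists W => T /is_triangleP [x [y [z [xy yz xz ->]]]].
  by rewrite tri_weight_set3 // triangle_sum.
- move=> m; split=> [[v <-]|/f_surj [v <-]]; last by exists v.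
  exact: f_range.
Qed.

End TriangleLabelings.

Section Blocks.
Variable w : nat -> nat.

Definition block_start c := \sum_(j < c) w j.

Lemma block_startS c : block_start c.+1 = block_start c + w c.
Proof. by rewrite /block_start big_ord_recr. Qed.

Lemma block_start_end c c' : c < c' -> block_start c + w c <= block_start c'.
Proof.
elim: c' => // c' IH; rewrite ltnS leq_eqVlt block_startS => /orP [/eqP -> //|/IH].
by move/leq_trans; apply; apply: leq_addr.
Qed.

Lemma block_pos_inj c c' i i' : i < w c -> i' < w c' ->
  block_start c + i = block_start c' + i' -> c = c' /\ i = i'.
Proof.
move=> hi hi' E; case: (ltngtP c c') => [lt_cc'|lt_c'c|eq_cc'].
- by have := block_start_end lt_cc'; lia.
- by have := block_start_end lt_c'c; lia.
- by move: E; rewrite eq_cc' => /addnI.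
Qed.

Lemma block_pos_lt c n i : c < n -> i < w c -> block_start c + i < block_start n.
Proof. by move=> /block_start_end; lia. Qed.

Lemma block_pos_surj n t : t < block_start n ->
  exists c i, [/\ c < n, i < w c & t = block_start c + i].
Proof.
elim: n => [|n IH]; first by rewrite /block_start big_ord0.
rewrite block_startS => ht; case: (ltnP t (block_start n)) => [/IH [c [i [hc hi ->]]]|hn].
  by exists c, i; split => //; apply: ltnW.
by exists n, (t - block_start n); split => //; lia.
Qed.

End Blocks.

Lemma block_start_predn (w : nat -> nat) c : (forall j, 0 < w j) ->
  block_start (fun j => (w j).-1) c + c = block_start w c.
Proof.
move=> w_gt0; elim: c => [|c IH]; first by rewrite /block_start !big_ord0.
by rewrite !block_startS -IH; have := w_gt0 c; lia.
Qed.

Section FanUnion.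
Variables (s k a b : nat).
Hypotheses (ha : 2 <= a) (hb : 2 <= b).

Local Notation V := (fan_union_vertex s k a b).
Local Notation adj := (@fan_union_adj s k a b).

Definition fan_of (x : V) : nat :=
  match x with inl (p, _) => val p | inr (q, _) => s + val q end.
Definition fan_pos (x : V) : nat :=
  match x with inl (_, i) => val i | inr (_, i) => val i end.
Definition fan_width (c : nat) : nat := if c < s then a else b.
Definition path_width (c : nat) : nat := (fan_width c).-1.
Definition fan_count := s + k.
Definition rim_count := s * a + k * b.

Lemma fan_width_ge2 c : 2 <= fan_width c.
Proof. by rewrite /fan_width; case: ifP. Qed.

(* [fan_adj] on positions, read in [nat] so that fans of both sizes share it. *)
Definition fan_rel (i j : nat) : bool :=
  [|| (i == 0) && (j != 0), (j == 0) && (i != 0),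
      (i != 0) && (i.+1 == j) | (j != 0) && (j.+1 == i)].

Lemma fan_union_adjE x y :
  adj x y = (fan_of x == fan_of y) && fan_rel (fan_pos x) (fan_pos y).
Proof.
case: x => [[p i]|[p i]]; case: y => [[q j]|[q j]] //=.
- by rewrite (_ : (_ == _) = false) //; apply/eqP; have := ltn_ord p; lia.
- by rewrite (_ : (_ == _) = false) //; apply/eqP; have := ltn_ord q; lia.
- by rewrite eqn_add2l.
Qed.

Lemma fan_union_adj_sym : symmetric adj.
Proof. by move=> x y; rewrite !fan_union_adjE /fan_rel; apply/idP/idP; lia. Qed.

Lemma fan_union_adj_irr : irreflexive adj.
Proof. by move=> x; rewrite fan_union_adjE /fan_rel; lia. Qed.

Lemma fan_of_lt x : fan_of x < fan_count.
Proof. by rewrite /fan_count; case: x => [[p i]|[p i]] /=; have := ltn_ord p; lia. Qed.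

Lemma fan_pos_le x : fan_pos x <= fan_width (fan_of x).
Proof.
rewrite /fan_width -ltnS; case: x => [[p i]|[p i]] /=; first by rewrite ltn_ord.
by rewrite [s + _ < s]ltnNge leq_addr /= ltn_ord.
Qed.

Lemma fan_vertex_inj x y : fan_of x = fan_of y -> fan_pos x = fan_pos y -> x = y.
Proof.
case: x => [[p i]|[p i]]; case: y => [[q j]|[q j]] /=.
- by move=> /val_inj -> /val_inj ->.
- by have := ltn_ord p; lia.
- by have := ltn_ord q; lia.
- by move=> /addnI /val_inj -> /val_inj ->.
Qed.

Lemma fan_vertex_at c i : c < fan_count -> i <= fan_width c ->
  exists x, fan_of x = c /\ fan_pos x = i.
Proof.
rewrite /fan_count /fan_width => hc; case: ltnP => [hs hi|hs hi].
  by exists (inl (Ordinal hs, inord i)); rewrite /= inordK.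
have hk : c - s < k by lia.
by exists (inr (Ordinal hk, inord i)); rewrite /= inordK //; lia.
Qed.

Lemma card_fan_union : #|V| = rim_count + fan_count.
Proof. by rewrite card_sum !card_prod !card_ord /rim_count /fan_count; lia. Qed.

Lemma rim_countE : block_start fan_width fan_count = rim_count.
Proof.
rewrite /block_start /fan_count big_split_ord /=.
rewrite (eq_bigr (fun=> a)) => [|i _]; last by rewrite /fan_width /= ltn_ord.
rewrite [X in _ + X](eq_bigr (fun=> b)) => [|i _]; last by rewrite /fan_width /= ltnNge leq_addr.
by rewrite !sum_nat_const !card_ord.
Qed.

Lemma path_countE : block_start path_width fan_count = rim_count - fan_count.
Proof.
rewrite -rim_countE -(block_start_predn _ (fun c => ltnW (fan_width_ge2 c))).
by rewrite addnK.
Qed.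

Definition rim_rank (x : V) : nat := block_start fan_width (fan_of x) + (fan_pos x).-1.
(* For a rim vertex [x] that is not the last of its fan, [path_rank x] numbers
   the rim edge from [x] to its successor. *)
Definition path_rank (x : V) : nat := block_start path_width (fan_of x) + (fan_pos x).-1.

Lemma rim_rankE x : rim_rank x = path_rank x + fan_of x.
Proof.
rewrite /rim_rank /path_rank -(block_start_predn _ (fun c => ltnW (fan_width_ge2 c))).
by rewrite /path_width; lia.
Qed.

Lemma rim_rank_lt x : fan_pos x != 0 -> rim_rank x < rim_count.
Proof.
move=> x0; rewrite -rim_countE; apply: block_pos_lt; first exact: fan_of_lt.
by have := fan_pos_le x; lia.
Qed.

Lemma rim_rank_inj x y : fan_pos x != 0 -> fan_pos y != 0 -> rim_rank x = rim_rank y -> x = y.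
Proof.
move=> x0 y0 /block_pos_inj [].
- by have := fan_pos_le x; lia.
- by have := fan_pos_le y; lia.
by move=> exy pxy; apply: fan_vertex_inj => //; lia.
Qed.

Lemma rim_rank_surj t : t < rim_count -> exists x, fan_pos x != 0 /\ rim_rank x = t.
Proof.
rewrite -rim_countE => /block_pos_surj [c [i [hc hi ->]]].
have [x [xc xi]] := @fan_vertex_at c i.+1 hc hi.
by exists x; rewrite /rim_rank xc xi.
Qed.

Lemma path_rank_lt x : fan_pos x != 0 -> fan_pos x < fan_width (fan_of x) ->
  path_rank x < rim_count - fan_count.
Proof.
move=> x0 x_lt; rewrite -path_countE; apply: block_pos_lt; first exact: fan_of_lt.
by rewrite /path_width; lia.
Qed.

Lemma path_rank_inj x y : fan_pos x != 0 -> fan_pos x < fan_width (fan_of x) ->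
  fan_pos y != 0 -> fan_pos y < fan_width (fan_of y) -> path_rank x = path_rank y -> x = y.
Proof.
move=> x0 x_lt y0 y_lt /block_pos_inj [].
- by rewrite /path_width; lia.
- by rewrite /path_width; lia.
by move=> exy pxy; apply: fan_vertex_inj => //; lia.
Qed.

Lemma path_rank_surj t : t < rim_count - fan_count ->
  exists x, [/\ fan_pos x != 0, fan_pos x < fan_width (fan_of x) & path_rank x = t].
Proof.
rewrite -path_countE => /block_pos_surj [c [i [hc hi ->]]].
have [x [xc xi]] := @fan_vertex_at c i.+1 hc ltac:(rewrite /path_width in hi; lia).
by exists x; rewrite /path_rank xc xi; split => //; rewrite /path_width in hi; lia.
Qed.

Definition rim_label (t : nat) : nat :=
  if odd t then t./2 + (rim_count.+1)./2 + 1 else t./2 + 1.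

Lemma rim_label_range t : t < rim_count -> 0 < rim_label t <= rim_count.
Proof. by rewrite /rim_label; case: ifP; lia. Qed.

Lemma rim_label_inj t t' : t < rim_count -> t' < rim_count ->
  rim_label t = rim_label t' -> t = t'.
Proof. by rewrite /rim_label; case: ifP; case: ifP; lia. Qed.

Lemma rim_labelS t : rim_label t + rim_label t.+1 = t + (rim_count.+1)./2 + 2.
Proof. by rewrite /rim_label /=; case: (odd t) => /=; lia. Qed.

Definition vlabel (x : V) : nat :=
  if fan_pos x == 0 then rim_count + 1 + fan_of x else rim_label (rim_rank x).

(* The value [0] for two centres is never used: centres are not adjacent. *)
Definition elabel (x y : V) : nat :=
  if fan_pos x == 0 then (if fan_pos y == 0 then 0 else 3 * rim_count - rim_rank y)
  else if fan_pos y == 0 then 3 * rim_count - rim_rank x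
  else rim_count + fan_count + 1 + minn (path_rank x) (path_rank y).

Lemma elabel_sym x y : elabel x y = elabel y x.
Proof. by rewrite /elabel; do 2!case: eqP => //; rewrite minnC. Qed.

Lemma elabel_spoke c v : fan_pos c = 0 -> fan_pos v != 0 ->
  elabel c v = 3 * rim_count - rim_rank v.
Proof. by move=> c0 /negbTE v0; rewrite /elabel c0 v0. Qed.

Lemma elabel_path u v : fan_pos u != 0 -> fan_of v = fan_of u -> fan_pos v = (fan_pos u).+1 ->
  elabel u v = rim_count + fan_count + 1 + path_rank u.
Proof.
move=> /negbTE u0 vu pv; rewrite /elabel u0 pv /= /path_rank vu.
by congr (_ + _); apply/minn_idPl; lia.
Qed.

Lemma rim_rankS u v : fan_pos u != 0 -> fan_of v = fan_of u -> fan_pos v = (fan_pos u).+1 ->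
  rim_rank v = (rim_rank u).+1.
Proof. by move=> u0 vu pv; rewrite /rim_rank vu pv; lia. Qed.

Variant fan_edge (x y : V) : Prop :=
  | SpokeEdge c v of fan_pos c = 0 & fan_pos v != 0 & fan_of v = fan_of c
      & [set x; y] = [set c; v]
  | PathEdge u v of fan_pos u != 0 & fan_of v = fan_of u & fan_pos v = (fan_pos u).+1
      & [set x; y] = [set u; v].

Lemma fan_edgeP x y : adj x y -> fan_edge x y.
Proof.
rewrite fan_union_adjE /fan_rel => /andP [/eqP exy].
case/or4P=> /andP [p1 p2].
- exact: SpokeEdge (eqP p1) p2 _ _.
- by apply: SpokeEdge (eqP p1) p2 _ _; rewrite // setUC.
- exact: PathEdge p1 _ (esym (eqP p2)) _.
- by apply: PathEdge p1 _ (esym (eqP p2)) _; rewrite // setUC.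
Qed.

Lemma adj_spoke c v : fan_pos c = 0 -> fan_pos v != 0 -> fan_of v = fan_of c -> adj c v.
Proof. by move=> c0 v0 vc; rewrite fan_union_adjE vc eqxx /fan_rel c0 v0. Qed.

Lemma adj_path u v : fan_pos u != 0 -> fan_of v = fan_of u -> fan_pos v = (fan_pos u).+1 ->
  adj u v.
Proof. by move=> u0 vu pv; rewrite fan_union_adjE vu eqxx /fan_rel pv eqxx u0 !orbT. Qed.

Lemma fan_count_double_le : fan_count.*2 <= rim_count.
Proof. by rewrite /fan_count /rim_count; nia. Qed.

Lemma elabel_set2 x y x' y' : [set x; y] = [set x'; y'] -> elabel x y = elabel x' y'.
Proof. by case/set2_eq_cases=> [[-> ->]|[-> ->]]; rewrite // elabel_sym. Qed.

Lemma vlabel_range x : 0 < vlabel x <= #|V|.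
Proof.
rewrite card_fan_union /vlabel; case: eqP => [_|/eqP x0].
  by have := fan_of_lt x; lia.
by have := rim_label_range (rim_rank_lt x0); lia.
Qed.

Lemma vlabel_inj : injective vlabel.
Proof.
move=> x y; rewrite /vlabel.
case: eqP => [x0|/eqP x0]; case: eqP => [y0|/eqP y0] E.
- by apply: fan_vertex_inj; lia.
- by have := rim_label_range (rim_rank_lt y0); lia.
- by have := rim_label_range (rim_rank_lt x0); lia.
- exact/(rim_rank_inj x0 y0)/(rim_label_inj (rim_rank_lt x0) (rim_rank_lt y0)).
Qed.

Lemma path_pos_lt u v : fan_of v = fan_of u -> fan_pos v = (fan_pos u).+1 ->
  fan_pos u < fan_width (fan_of u).
Proof. by move=> vu pv; have := fan_pos_le v; rewrite vu pv. Qed.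

Lemma elabel_range x y : adj x y ->
  #|V| < elabel x y <= #|V| + (2 * rim_count - fan_count).
Proof.
move=> /fan_edgeP xy; have := fan_count_double_le; rewrite card_fan_union.
case: xy => [c v c0 v0 vc Exy|u v u0 vu pv Exy]; rewrite (elabel_set2 Exy).
  by rewrite elabel_spoke //; have := rim_rank_lt v0; lia.
by rewrite elabel_path //; have := path_rank_lt u0 (path_pos_lt vu pv); lia.
Qed.

Lemma elabel_inj x y x' y' : adj x y -> adj x' y' -> elabel x y = elabel x' y' ->
  [set x; y] = [set x'; y'].
Proof.
move=> /fan_edgeP xy /fan_edgeP xy'; have := fan_count_double_le.
case: xy => [c v c0 v0 vc Exy|u v u0 vu pv Exy];
  case: xy' => [c' v' c0' v0' vc' Exy'|u' v' u0' vu' pv' Exy'];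
  rewrite (elabel_set2 Exy) (elabel_set2 Exy') Exy Exy'.
- rewrite (elabel_spoke c0 v0) (elabel_spoke c0' v0') => _ E.
  move: (rim_rank_lt v0) (rim_rank_lt v0') => r_lt r_lt'.
  have ev : v = v' by apply: rim_rank_inj => //; lia.
  by rewrite ev; congr [set _; _]; apply: fan_vertex_inj; rewrite -?vc -?vc' ?ev ?c0.
- rewrite (elabel_spoke c0 v0) (elabel_path u0' vu' pv').
  by have := rim_rank_lt v0; have := path_rank_lt u0' (path_pos_lt vu' pv'); lia.
- rewrite (elabel_path u0 vu pv) (elabel_spoke c0' v0').
  by have := rim_rank_lt v0'; have := path_rank_lt u0 (path_pos_lt vu pv); lia.
- rewrite (elabel_path u0 vu pv) (elabel_path u0' vu' pv').
  move=> _ /addnI /(path_rank_inj u0 (path_pos_lt vu pv) u0' (path_pos_lt vu' pv')) eu.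
  by rewrite eu; congr [set _; _]; apply: fan_vertex_inj; rewrite ?vu ?vu' ?pv ?pv' eu.
Qed.

Lemma elabel_surj m : #|V| < m <= #|V| + (2 * rim_count - fan_count) ->
  exists x y, adj x y /\ elabel x y = m.
Proof.
have := fan_count_double_le; rewrite card_fan_union => F_le hm.
case: (ltnP (2 * rim_count) m) => hm2.
  have [v [v0 rv]] := @rim_rank_surj (3 * rim_count - m) ltac:(lia).
  have [c [cv c0]] := fan_vertex_at (fan_of_lt v) (leq0n (fan_width (fan_of v))).
  by exists c, v; rewrite adj_spoke ?elabel_spoke ?rv ?cv //; split => //; lia.
have [u [u0 u_lt pu]] := @path_rank_surj (m - (rim_count + fan_count + 1)) ltac:(lia).
have [v [vu pv]] := fan_vertex_at (fan_of_lt u) u_lt.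
by exists u, v; rewrite adj_path ?elabel_path ?pu //; split => //; lia.
Qed.

Lemma spoke_in_triangle c v : fan_pos c = 0 -> fan_pos v != 0 -> fan_of v = fan_of c ->
  exists z, adj c z && adj v z.
Proof.
move=> c0 v0 vc; case: (ltnP (fan_pos v) (fan_width (fan_of v))) => [v_lt|v_end].
  have [z [zv pz]] := fan_vertex_at (fan_of_lt v) v_lt.
  by exists z; rewrite adj_spoke ?adj_path ?pz ?zv.
have [z [zv pz]] := fan_vertex_at (fan_of_lt v) (leq_pred (fan_width (fan_of v))).
have v_pos : fan_pos v = fan_width (fan_of v) by have := fan_pos_le v; lia.
have z0 : fan_pos z != 0 by rewrite pz; have := fan_width_ge2 (fan_of v); lia.
exists z; rewrite adj_spoke ?zv // fan_union_adj_sym adj_path ?zv //.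
by rewrite pz v_pos; have := fan_width_ge2 (fan_of v); lia.
Qed.

Lemma adj_in_fan_triangle x y : adj x y -> exists z, adj x z && adj y z.
Proof.
have in_set2 u v z : [set x; y] = [set u; v] -> adj u z && adj v z -> adj x z && adj y z.
  by case/set2_eq_cases=> [[-> ->]|[-> ->]]; rewrite // andbC.
case/fan_edgeP=> [c v c0 v0 vc Exy|u v u0 vu pv Exy].
  by have [z czv] := spoke_in_triangle c0 v0 vc; exists z; apply: in_set2 Exy czv.
have [c [cu c0]] := fan_vertex_at (fan_of_lt u) (leq0n (fan_width (fan_of u))).
exists c; apply: in_set2 Exy _.
by rewrite !(fan_union_adj_sym _ c) !adj_spoke ?pv ?vu.
Qed.

Definition fan_magic := 8 * rim_count + fan_count + (rim_count.+1)./2 + 3.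

Definition fan_tri_sum x y z :=
  vlabel x + vlabel y + vlabel z + elabel x y + elabel y z + elabel x z.

Lemma fan_tri_sum_center c u v : fan_pos c = 0 -> fan_pos u != 0 ->
  fan_of u = fan_of c -> fan_of v = fan_of u -> fan_pos v = (fan_pos u).+1 ->
  fan_tri_sum c u v = fan_magic.
Proof.
move=> c0 u0 uc vu pv; have v0 : fan_pos v != 0 by rewrite pv.
rewrite /fan_tri_sum /fan_magic elabel_spoke // elabel_path // elabel_spoke //.
rewrite /vlabel c0 (negbTE u0) (negbTE v0) eqxx (rim_rankS u0 vu pv).
have := rim_labelS (rim_rank u); have := rim_rank_lt v0; rewrite (rim_rankS u0 vu pv).
by rewrite rim_rankE uc; lia.
Qed.

Lemma fan_tri_sumC12 x y z : fan_tri_sum x y z = fan_tri_sum y x z.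
Proof. by rewrite /fan_tri_sum (elabel_sym y x) (elabel_sym y z); lia. Qed.

Lemma fan_tri_sumC23 x y z : fan_tri_sum x y z = fan_tri_sum x z y.
Proof. by rewrite /fan_tri_sum (elabel_sym z y); lia. Qed.

Lemma adj_center c v : fan_pos c = 0 -> adj c v -> fan_pos v != 0 /\ fan_of v = fan_of c.
Proof. by move=> c0; rewrite fan_union_adjE /fan_rel c0 => /andP [/eqP ->]; lia. Qed.

Lemma adj_rim u v : fan_pos u != 0 -> fan_pos v != 0 -> adj u v ->
  fan_of v = fan_of u /\ (fan_pos v = (fan_pos u).+1 \/ fan_pos u = (fan_pos v).+1).
Proof. by move=> u0 v0; rewrite fan_union_adjE /fan_rel => /andP [/eqP ->]; lia. Qed.

Lemma fan_rel_center i j l : fan_rel i j -> fan_rel j l -> fan_rel i l ->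
  [|| i == 0, j == 0 | l == 0].
Proof. by rewrite /fan_rel; lia. Qed.

Lemma fan_triangle_sum x y z : adj x y -> adj y z -> adj x z ->
  fan_tri_sum x y z = fan_magic.
Proof.
wlog x0 : x y z / fan_pos x = 0 => [hwlog xy yz xz|xy yz xz].
  have : [|| fan_pos x == 0, fan_pos y == 0 | fan_pos z == 0].
    move: xy yz xz; rewrite !fan_union_adjE => /andP [_ ?] /andP [_ ?] /andP [_ ?].
    exact: fan_rel_center.
  case/or3P=> /eqP p0; first exact: hwlog.
    by rewrite fan_tri_sumC12 hwlog // fan_union_adj_sym.
  by rewrite fan_tri_sumC23 fan_tri_sumC12 hwlog // fan_union_adj_sym.
have [y0 yx] := adj_center x0 xy; have [z0 zx] := adj_center x0 xz.
have [zy [pz|py]] := adj_rim y0 z0 yz; first exact: fan_tri_sum_center.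
by rewrite fan_tri_sumC23; apply: fan_tri_sum_center; rewrite ?zx.
Qed.

Theorem fan_union_C3_supermagic : C3_supermagic adj.
Proof.
exact: (C3_supermagic_of_labels fan_union_adj_sym fan_union_adj_irr
  (fun x y _ => elabel_sym x y) vlabel_inj vlabel_range elabel_range elabel_inj
  elabel_surj adj_in_fan_triangle fan_triangle_sum).
Qed.

End FanUnion.

Theorem theorem9 (s k n : nat) (hs : 0 < s) (hk : 0 < k) (hn : 3 <= n) :
  @C3_supermagic _ (@fan_union_adj s k n.+1 n).
Proof. by apply: fan_union_C3_supermagic; lia. Qed.
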